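(* Let $q(x)\in\mathbb{Z}[x]$ be monic and let $\mathrm{sym}(q)(x)=x^{\deg q}\,q\!\left(x+\frac1x\right)$. Then $\mathrm{sym}(q)$ is symplectically irreducible if and only if $q(x)$ is irreducible over $\mathbb{Z}$.
   Context: A symplectic polynomial is an integer polynomial that is the characteristic polynomial of some element of $\mathrm{Sp}(2n,\mathbb{Z})$; equivalently, an even-degree integer polynomial $a_{2n}x^{2n}+\cdots+a_0$ that is monic ($a_{2n}=1$) and palindromic ($a_i=a_{2n-i}$). A symplectic polynomial is symplectically irreducible if it is not the product of two nontrivial symplectic polynomials. *)

From mathcomp Require Import all_boot all_order all_algebra.
Set Implicit Arguments. Unset Strict Implicit. Unset Printing Implicit Defensive.
Import GRing.Theory.
Local Open Scope ring_scope.

Definition is_symplectic (p : {poly int}) : Prop :=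
  [/\ p \is monic, ~~ odd (size p).-1 &
      forall i : nat, (i <= (size p).-1)%N -> p`_i = p`_((size p).-1 - i)].

(* Symplectically irreducible: a nontrivial symplectic polynomial that is not
   the product of two nontrivial (i.e. different from 1, equivalently of
   positive degree) symplectic polynomials. *)
Definition symp_irreducible (p : {poly int}) : Prop :=
  [/\ is_symplectic p, p != 1 &
      ~ exists a b : {poly int},
          [/\ is_symplectic a, is_symplectic b, a != 1, b != 1 & p = a * b]].

Definition irreducible_Zpoly (q : {poly int}) : Prop :=
  [/\ q != 0, q \isn't a GRing.unit &
      forall a b : {poly int}, q = a * b ->
        a \is a GRing.unit \/ b \is a GRing.unit].

(* sym(q)(x) = x^{deg q} q(x + 1/x) = sum_i q_i x^{deg q - i} (x^2+1)^i. *)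
Definition sym (q : {poly int}) : {poly int} :=
  \sum_(i < size q)
     q`_i *: ('X^((size q).-1 - i) * ('X^2 + 1) ^+ i).

From Pilot Require Import Defs.
From HB Require Import structures.
From mathcomp Require Import all_boot all_order all_algebra.
From mathcomp Require Import zify.
Set Implicit Arguments. Unset Strict Implicit. Unset Printing Implicit Defensive.
Import GRing.Theory.
Local Open Scope ring_scope.

(* Put Y = x^2 + 1.  Then sym q = sum_i q_i x^(n-i) Y^i is the degree-n
   homogenization of q evaluated at (x, Y); homogenization is multiplicative,
   so sym is multiplicative on monic polynomials.  Reversing coefficients is
   homogenization at (x, 1), hence multiplicative too, and the palindromic
   polynomials of degree 2n are exactly the sym q with deg q <= n: subtract
   the top term c Y^n and divide by x.  So sym is a multiplicative bijection
   from monic polynomials onto symplectic ones with sym q = 1 iff q = 1, and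
   factorizations correspond.  Finally, any factorization of a monic q can
   be rescaled into one with monic factors, so irreducibility of q in Z[x]
   only concerns monic factorizations. *)

Section Homogenization.
Variables (R : comNzRingType) (A : comAlgType R) (u v : A).
Implicit Types p r : {poly R}.

Definition homog (N : nat) (p : {poly R}) : A :=
  \sum_(i < N.+1) p`_i *: (u ^+ (N - i) * v ^+ i).

Fact homog_is_semilinear N : semilinear (homog N).
Proof.
split=> [c p|p r]; rewrite /homog.
  by rewrite scaler_sumr; apply: eq_bigr => i _; rewrite coefZ scalerA.
by rewrite -big_split; apply: eq_bigr => i _; rewrite coefD scalerDl.
Qed.
HB.instance Definition _ N :=
  GRing.isSemilinear.Build R {poly R} A _ (homog N) (homog_is_semilinear N).

Lemma homogXn N i : (i <= N)%N -> homog N 'X^i = u ^+ (N - i) * v ^+ i.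
Proof.
move=> iN; rewrite /homog (bigD1 (Ordinal (iN : (i < N.+1)%N))) //=.
rewrite coefXn eqxx scale1r big1 ?addr0 // => j; rewrite -val_eqE /= => /negbTE neq_ji.
by rewrite coefXn neq_ji scale0r.
Qed.

Lemma homogS N p : homog N.+1 p = u * homog N p + p`_N.+1 *: v ^+ N.+1.
Proof.
rewrite /homog big_ord_recr /= subnn expr0 mul1r mulr_sumr; congr (_ + _).
by apply: eq_bigr => i _; rewrite -scalerAr mulrA -exprS subSn // -ltnS.
Qed.

Lemma homogM N M p r : (size p <= N.+1)%N -> (size r <= M.+1)%N ->
  homog (N + M) (p * r) = homog N p * homog M r.
Proof.
move=> sp sr.
rewrite -[p](take_poly_id sp) -[r](take_poly_id sr) /take_poly !poly_def.
rewrite mulr_suml !linear_sum /= mulr_suml; apply: eq_bigr => i _.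
rewrite mulr_sumr linear_sum /= mulr_sumr; apply: eq_bigr => j _.
have [iN jM] := (ltn_ord i, ltn_ord j).
rewrite -scalerAl -scalerAr scalerA -exprD !linearZ /= -scalerAl -scalerAr scalerA.
rewrite !homogXn; [|lia..].
have -> : (N + M - (i + j) = (N - i) + (M - j))%N by lia.
by rewrite !exprD; congr (_ *: _); rewrite mulrACA.
Qed.

Lemma homog_exp N k p : (size p <= N.+1)%N -> homog (k * N) (p ^+ k) = homog N p ^+ k.
Proof.
move=> sp; elim: k => [|k IHk].
  by rewrite /homog big_ord1 /= coef1 /= !expr0 mulr1 scale1r.
rewrite exprS mulSn homogM ?IHk ?exprS // (leq_trans (size_poly_exp_leq _ _)) //.
by move: sp; case: (size p) => [|s] //= sN; rewrite ltnS mulnC leq_mul2l -ltnS sN orbT.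
Qed.

End Homogenization.

Notation reciprocal K := (homog 'X 1 K).

Section Palindromic.
Variable R : comNzRingType.
Implicit Types p r : {poly R}.

Lemma reciprocalE K p : reciprocal K p = \poly_(i < K.+1) p`_(K - i).
Proof.
rewrite poly_def /homog (reindex_inj rev_ord_inj) /=; apply: eq_bigr => i _.
by rewrite expr1n mulr1 subKn // -ltnS.
Qed.

Definition palindromic K p := reciprocal K p == p.

Lemma palindromicP K p :
  reflect ((size p <= K.+1)%N /\ forall i, (i <= K)%N -> p`_i = p`_(K - i))
          (palindromic K p).
Proof.
rewrite /palindromic reciprocalE; apply: (iffP eqP) => [palp | [sp palp]].
  split=> [|i iK]; first by rewrite -palp size_poly.
  by rewrite -{1}palp coef_poly ltnS iK.
apply/polyP => i; rewrite coef_poly ltnS; case: leqP => [iK | Ki].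
  by rewrite -palp.
by move/leq_sizeP: sp => ->.
Qed.

Lemma size_palindromic K p : palindromic K p -> (size p <= K.+1)%N.
Proof. by case/palindromicP. Qed.

Lemma coef_palindromic K p i : palindromic K p -> (i <= K)%N -> p`_i = p`_(K - i).
Proof. by case/palindromicP => _; apply. Qed.

Lemma palindromicM K M p r :
  palindromic K p -> palindromic M r -> palindromic (K + M) (p * r).
Proof.
move=> palp palr; rewrite /palindromic homogM ?size_palindromic //.
by rewrite (eqP palp) (eqP palr).
Qed.

Lemma palindromic_exp K k p : palindromic K p -> palindromic (k * K) (p ^+ k).
Proof.
by move=> palp; rewrite /palindromic homog_exp ?size_palindromic // (eqP palp).
Qed.

Lemma palindromicX : palindromic 2 ('X : {poly R}).
Proof. by apply/eqP; rewrite -{2 3}['X]expr1 homogXn // expr1n mulr1. Qed.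

Lemma palindromicXK K p : palindromic K.+2 ('X * p) -> palindromic K p.
Proof.
move=> palXp; have coefXp i : p`_i = ('X * p)`_i.+1 by rewrite coefXM.
apply/palindromicP; split=> [|i iK].
  apply/leq_sizeP => j; rewrite leq_eqVlt => /predU1P [<- | Kj].
    by rewrite coefXp (coef_palindromic palXp) // subnn coefXM.
  by rewrite coefXp; move/leq_sizeP: (size_palindromic palXp); apply.
by rewrite !coefXp (coef_palindromic palXp) ?subSS -?subSn //; lia.
Qed.

End Palindromic.

Lemma size_le_coef0 (R : nzSemiRingType) (p : {poly R}) n :
  (size p <= n.+1)%N -> p`_n = 0 -> (size p <= n)%N.
Proof.
move=> sp pn0; apply/leq_sizeP => j; rewrite leq_eqVlt => /predU1P [<- // | nj].
by move/leq_sizeP: sp; apply.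
Qed.

Lemma size_eq_coef_neq0 (R : nzSemiRingType) (p : {poly R}) n :
  (size p <= n.+1)%N -> p`_n != 0 -> size p = n.+1.
Proof.
move=> sp pn0; apply/eqP; rewrite eqn_leq sp ltnNge.
by apply: contra pn0 => /leq_sizeP ->.
Qed.

Lemma prednK_size_monic (R : nzSemiRingType) (q : {poly R}) :
  q \is monic -> size q = (size q).-1.+1.
Proof. by move=> mq; rewrite prednK // size_poly_gt0 monic_neq0. Qed.

Notation symh N := (homog 'X ('X^2 + 1) N).

Section Symmetrization.
Variable R : comNzRingType.
Implicit Types p q : {poly R}.
Local Notation Y := ('X^2 + 1 : {poly R}).

Lemma coef0_Yexp k : (Y ^+ k)`_0 = 1.
Proof. by rewrite -horner_coef0 horner_exp !hornerE expr0n add0r expr1n. Qed.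

Lemma palindromic_Yexp k : palindromic k.*2 (Y ^+ k).
Proof.
rewrite -muln2; apply: palindromic_exp; apply/palindromicP; split.
  by rewrite -polyC1 size_XnaddC.
by case=> [|[|[|i]]] // _; rewrite !(coefD, coefXn, coef1) addrC.
Qed.

Lemma coef_Yexp_top k : (Y ^+ k)`_k.*2 = 1.
Proof. by rewrite (coef_palindromic (palindromic_Yexp k)) // subnn coef0_Yexp. Qed.

Lemma palindromic_symh N q : palindromic N.*2 (symh N q).
Proof.
rewrite /palindromic linear_sum; apply/eqP/eq_bigr => i _; rewrite linearZ /=.
have iN : (i <= N)%N by rewrite -ltnS.
have := palindromicM (palindromic_exp (N - i) (@palindromicX R)) (palindromic_Yexp i).
have -> : ((N - i) * 2 + i.*2 = N.*2)%N by lia.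
by move/eqP->.
Qed.

Lemma coef0_symh N q : (symh N q)`_0 = q`_N.
Proof.
case: N => [|N]; first by rewrite /homog big_ord1 !expr0 mulr1 coefZ coef1 mulr1.
by rewrite homogS coefD coefXM coefZ coef0_Yexp mulr1 add0r.
Qed.

Lemma coef_symh_top N q : (symh N q)`_N.*2 = q`_N.
Proof. by rewrite (coef_palindromic (palindromic_symh N q)) // subnn coef0_symh. Qed.

Lemma symh_eq0 N q : (size q <= N.+1)%N -> symh N q = 0 -> q = 0.
Proof.
elim: N q => [|N IHN] q sq symq0.
  by rewrite (size1_polyC sq) -coef0_symh symq0 coef0.
have qN0 : q`_N.+1 = 0 by rewrite -coef0_symh symq0 coef0.
apply: IHN; first exact: size_le_coef0.
apply: (monic_lreg (@monicX R)); rewrite mulr0.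
by move: symq0; rewrite homogS qN0 scale0r addr0.
Qed.

Lemma symh_inj N p q : (size p <= N.+1)%N -> (size q <= N.+1)%N ->
  symh N p = symh N q -> p = q.
Proof.
move=> sp sq eq_pq; apply/eqP; rewrite -subr_eq0; apply/eqP/(@symh_eq0 N).
  by rewrite (leq_trans (size_add _ _)) // size_opp geq_max sp sq.
by rewrite linearB /= eq_pq subrr.
Qed.

Lemma symh_surj N p :
  palindromic N.*2 p -> exists2 q : {poly R}, (size q <= N.+1)%N & p = symh N q.
Proof.
elim: N p => [|N IHN] p palp.
  exists p; first exact: size_palindromic palp.
  rewrite /homog big_ord1 !expr0 mulr1 alg_polyC.
  exact: size1_polyC (size_palindromic palp).
set c := p`_N.+1.*2; set p1 := p - c *: Y ^+ N.+1.
have palp1 : palindromic N.+1.*2 p1.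
  by rewrite /palindromic linearB linearZ /= (eqP palp) (eqP (palindromic_Yexp _)).
have p1_0 : p1`_0 = 0.
  by rewrite (coef_palindromic palp1) // subn0 coefB coefZ coef_Yexp_top mulr1 subrr.
have def_p1 : p1 = 'X * drop_poly 1 p1.
  by rewrite -[LHS](poly_take_drop 1) /take_poly poly_def big_ord1 p1_0 scale0r add0r mulrC.
have [q sq def_q] : exists2 q : {poly R}, (size q <= N.+1)%N & drop_poly 1 p1 = symh N q.
  by apply: IHN; apply: palindromicXK; rewrite -def_p1.
exists (q + c *: 'X^(N.+1)).
  rewrite (leq_trans (size_add _ _)) // geq_max (leq_trans sq) //=.
  by rewrite (leq_trans (size_scale_leq _ _)) // size_polyXn.
rewrite linearD linearZ /= homogS homogXn // subnn expr0 mul1r -def_q -def_p1.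
by move/leq_sizeP: sq => ->; rewrite // scale0r addr0 subrK.
Qed.

Lemma monic_symh N q : q \is monic -> size q = N.+1 ->
  size (symh N q) = N.*2.+1 /\ symh N q \is monic.
Proof.
move=> /monicP lead_q sq; have qN1 : q`_N = 1 by rewrite -lead_q lead_coefE sq.
have size_sq : size (symh N q) = N.*2.+1.
  apply: size_eq_coef_neq0; first exact: size_palindromic (palindromic_symh N q).
  by rewrite coef_symh_top qN1 oner_neq0.
by split=> //; apply/monicP; rewrite lead_coefE size_sq coef_symh_top.
Qed.

End Symmetrization.

Section SymplecticCorrespondence.
Implicit Types a b p q : {poly int}.

Lemma symE q : sym q = symh (size q).-1 q.
Proof.
case sq: (size q) => [|n]; last by rewrite /sym sq.
by move/eqP: sq; rewrite size_poly_eq0 => /eqP->; rewrite linear0 /sym size_poly0 big_ord0.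
Qed.

Lemma size_sym_monic q : q \is monic -> size (sym q) = ((size q).-1).*2.+1.
Proof.
by move=> mq; rewrite symE; case: (monic_symh mq (prednK_size_monic mq)).
Qed.

(* [Defs.] is needed because mathcomp's sesquilinear forms export an
   [is_symplectic] of their own. *)
Lemma is_symplectic_sym q : q \is monic -> Defs.is_symplectic (sym q).
Proof.
move=> mq; have [size_sq monic_sq] := monic_symh mq (prednK_size_monic mq).
rewrite symE.
split=> //; rewrite size_sq /= ?odd_double // => i iN.
exact: coef_palindromic (palindromic_symh _ q) iN.
Qed.

Lemma symM a b : a \is monic -> b \is monic -> sym (a * b) = sym a * sym b.
Proof.
move=> ma mb; have [a0 b0] := (monic_neq0 ma, monic_neq0 mb).
rewrite !symE; have -> : (size (a * b)).-1 = ((size a).-1 + (size b).-1)%N.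
  by rewrite size_monicM //; move: a0 b0; rewrite -!size_poly_gt0; lia.
by rewrite homogM ?leqSpred.
Qed.

Lemma sym_inj : {in monic &, injective sym}.
Proof.
move=> a b ma mb eq_sym; have := size_sym_monic ma.
rewrite eq_sym size_sym_monic // => /succn_inj /double_inj eq_size.
move: eq_sym; rewrite !symE eq_size; apply: symh_inj; first exact: leqSpred.
by rewrite -eq_size leqSpred.
Qed.

Lemma sym1 : sym 1 = 1.
Proof. by rewrite /sym size_poly1 big_ord1 coef1 scale1r !expr0 mulr1. Qed.

Lemma sym_eq1 q : q \is monic -> (sym q == 1) = (q == 1).
Proof.
move=> mq; apply/eqP/eqP => [|->]; last exact: sym1.
by rewrite -{1}sym1 => /(sym_inj mq (monic1 _)).
Qed.

Lemma is_symplecticP p :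
  Defs.is_symplectic p -> exists2 q : {poly int}, q \is monic & p = sym q.
Proof.
case=> mp even_p pal_p; set N := (size p).-1./2.
have sp : size p = N.*2.+1.
  rewrite (prednK_size_monic mp) -[(size p).-1 in LHS]odd_double_half.
  by rewrite (negbTE even_p).
have [|q sq def_p] := @symh_surj _ N p.
  by apply/palindromicP; rewrite sp; split=> //; move: pal_p; rewrite sp.
have qN1 : q`_N = 1 by rewrite -coef_symh_top -def_p -(monicP mp) lead_coefE sp.
have size_q : size q = N.+1 by apply: size_eq_coef_neq0; rewrite // qN1 oner_neq0.
exists q; first by apply/monicP; rewrite lead_coefE size_q.
by rewrite symE size_q.
Qed.

End SymplecticCorrespondence.

Section MonicFactorization.
Variable R : idomainType.
Implicit Types a b q : {poly R}.

Definition monic_irreducible q :=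
  q != 1 /\
  ~ exists a b, [/\ a \is monic, b \is monic, a != 1, b != 1 & q = a * b].

Lemma monic_unitE q : q \is monic -> (q \is a GRing.unit) = (q == 1).
Proof.
move=> mq; apply/idP/eqP => [|->]; last exact: unitr1.
rewrite poly_unitE => /andP [/eqP sq _].
have := monicP mq; rewrite lead_coefE sq => /= q0_1.
by rewrite (size1_polyC (eq_leq sq)) q0_1.
Qed.

Lemma monic_factors q a b : q \is monic -> q = a * b ->
  [/\ lead_coef b *: a \is monic, lead_coef a *: b \is monic
    & q = (lead_coef b *: a) * (lead_coef a *: b)].
Proof.
move=> mq def_q; have lead_ab : lead_coef a * lead_coef b = 1.
  by rewrite -lead_coefM -def_q (monicP mq).
split; [by apply/monicP; rewrite lead_coefZ mulrC | by apply/monicP; rewrite lead_coefZ |].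
by rewrite -scalerAl -scalerAr scalerA mulrC lead_ab scale1r.
Qed.

Lemma unit_scale_eq1 c a : c *: a = 1 -> a \is a GRing.unit.
Proof. by move=> ca1; apply/unitrPr; exists c%:P; rewrite mulrC mul_polyC. Qed.

End MonicFactorization.

Lemma irreducible_ZpolyE q : q \is monic -> irreducible_Zpoly q <-> monic_irreducible q.
Proof.
move=> mq; split=> [[_ q_nunit irr_q] | [q1 no_fact]].
  split; first by rewrite -(monic_unitE mq).
  case=> a [b [ma mb a1 b1 def_q]].
  by case: (irr_q a b def_q); rewrite monic_unitE //; apply/negP.
split; [exact: monic_neq0 | by rewrite monic_unitE | move=> a b def_q].
have [ma' mb' def_q'] := monic_factors mq def_q.
have [/unit_scale_eq1 ua | a'1] := eqVneq (lead_coef b *: a) 1; first by left.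
have [/unit_scale_eq1 ub | b'1] := eqVneq (lead_coef a *: b) 1; first by right.
by case: no_fact; exists (lead_coef b *: a), (lead_coef a *: b).
Qed.

Lemma symp_irreducible_symE q :
  q \is monic -> symp_irreducible (sym q) <-> monic_irreducible q.
Proof.
move=> mq; split=> [[_ sq1 no_fact] | [q1 no_fact]].
  split; first by rewrite -(sym_eq1 mq).
  case=> a [b [ma mb a1 b1 def_q]]; apply: no_fact.
  exists (sym a), (sym b); split; rewrite ?sym_eq1 //; try exact: is_symplectic_sym.
  by rewrite def_q symM.
split; [exact: is_symplectic_sym | by rewrite sym_eq1 |].
case=> a [b [sa sb a1 b1 def_sq]].
have [qa mqa def_a] := is_symplecticP sa; have [qb mqb def_b] := is_symplecticP sb.
apply: no_fact; exists qa, qb.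
split; rewrite -?(sym_eq1 mqa) -?(sym_eq1 mqb) -?def_a -?def_b //.
by apply: sym_inj; rewrite ?inE ?monicMl // symM // -def_a -def_b.
Qed.

Theorem lemma3p1 (q : {poly int}) :
  q \is monic -> (symp_irreducible (sym q) <-> irreducible_Zpoly q).
Proof.
move=> mq; apply: iff_trans (symp_irreducible_symE mq) _.
exact: iff_sym (irreducible_ZpolyE mq).
Qed.
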